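(* Let $N$ be an odd positive integer, let $p$ be the smallest prime factor of $N$, and let $K\ge N$ be a positive integer. Let $a_2,a_1\in\mathbb{Z}_N$ with $\gcd(a_2,N)=1$, and let $g:\mathbb{Z}_N\to\mathbb{Z}_N$, $g(x)=a_2x^2+a_1x$. Let $\phi:\mathbb{Z}_N\to\mathbb{Z}_K$ send the residue class of $x\in\{0,1,\dots,N-1\}$ to the residue class of the same integer $x$ modulo $K$, and let $f=\phi\circ g:\mathbb{Z}_N\to\mathbb{Z}_K$. For integers $a,b$ consider the equation $f(x+a)-f(x)=b$ in the unknown $x\in\mathbb{Z}_N$, where $x+a$ is computed in $\mathbb{Z}_N$ and the equation is read in $\mathbb{Z}_K$. Then: (1) if $K=N$, for every integer $a$ with $-p<a<p$, $a\neq 0$, and every integer $b$ with $-N<b<N$, the equation has at most one solution $x\in\mathbb{Z}_N$; (2) if $N<K<2N-1$, for every integer $a$ with $-p<a<p$, $a\ne 0$, and every integer $b$ with $-K+N-1<b<K-N+1$, the equation has at most one solution $x\in\mathbb{Z}_N$; (3) if $K\ge 2N-1$, for every integer $a$ with $-p<a<p$, $a\neq 0$, and every integer $b$ with $-K<b<K$, the equation has at most one solution $x\in\mathbb{Z}_N$.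
   Context: $\mathbb{Z}_N$ denotes the ring of integers modulo $N$. *)

(* Z_N is modelled by residues 'I_N = {0,...,N-1};
   arithmetic in Z_N / Z_K is done on integer representatives with intdiv's %%. *)
From mathcomp Require Import all_boot all_order all_algebra.
Set Implicit Arguments. Unset Strict Implicit. Unset Printing Implicit Defensive.
Import GRing.Theory Num.Theory.
Local Open Scope ring_scope.

Definition gmap (N : nat) (a2 a1 : int) (x : int) : int :=
  ((a2 * x ^+ 2 + a1 * x) %% (N%:Z))%Z.

Definition phimap (K : nat) (r : int) : int := (r %% (K%:Z))%Z.

Definition fmap (N K : nat) (a2 a1 : int) (x : int) : int :=
  phimap K (gmap N a2 a1 x).

Definition is_sol (N K : nat) (a2 a1 : int) (a b : int) (x : 'I_N) : Prop :=
  (fmap N K a2 a1 (((x%:Z) + a) %% (N%:Z))%Z - fmap N K a2 a1 (x%:Z)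
     = b %[mod (K%:Z)])%Z.

Definition at_most_one_sol (N K : nat) (a2 a1 : int) (a b : int) : Prop :=
  forall x y : 'I_N, is_sol K a2 a1 a b x -> is_sol K a2 a1 a b y -> x = y.

(* Since N <= K, phi is the identity on representatives, so f(x+a) - f(x) is
   the integer D(x) = g(x+a) - g(x), which lies in (-N, N) and satisfies
   D(x) = a2 (2ax + a^2) + a1 a (mod N).  Two solutions x, y give
   D(x) = D(y) (mod N) in each case: directly when K = N; because |D - b| < K
   forces D(x) = b = D(y) when N < K < 2N - 1; because |D(x) - D(y)| < K when
   K >= 2N - 1.  Hence N divides 2 a a2 (x - y), and 2, a2 and a are coprime
   to N (N is odd and 0 < |a| < p), so x = y. *)

From mathcomp Require Import all_boot all_order all_algebra.
From mathcomp Require Import zify ring.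
Set Implicit Arguments. Unset Strict Implicit. Unset Printing Implicit Defensive.
Import GRing.Theory Num.Theory.
Local Open Scope ring_scope.

Lemma eqz_mod_small (d m n : int) :
  (m = n %[mod d])%Z -> (`|m - n| < `|d|)%N -> m = n.
Proof.
move=> /eqP; rewrite eqz_mod_dvd dvdzE => /dvdn_leq dmn lt_mn_d.
apply/eqP; rewrite -subr_eq0 -absz_eq0; apply: contraTT lt_mn_d.
by rewrite -lt0n -leqNgt => /dmn.
Qed.

Lemma coprime_lt_pdiv (n m : nat) : (0 < m < pdiv n)%N -> coprime n m.
Proof.
move=> /andP[m_gt0 lt_m_pdiv]; rewrite /coprime eqn_leq gcdn_gt0 m_gt0 orbT andbT.
rewrite leqNgt; apply/negP => /pdiv_min_dvd/(_ (dvdn_gcdl n m)).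
have := dvdn_leq m_gt0 (dvdn_gcdr n m); lia.
Qed.

Lemma modzBm (m n d : int) : ((m %% d)%Z - (n %% d)%Z = m - n %[mod d])%Z.
Proof. by rewrite modzDml -modzDmr modzNm modzDmr. Qed.

Lemma quadz_mod (c2 c1 u v d : int) : (u = v %[mod d])%Z ->
  (c2 * u ^+ 2 + c1 * u = c2 * v ^+ 2 + c1 * v %[mod d])%Z.
Proof.
move=> /eqP; rewrite !eqz_mod_dvd => duv; apply/eqP; rewrite eqz_mod_dvd.
have -> : c2 * u ^+ 2 + c1 * u - (c2 * v ^+ 2 + c1 * v)
          = (u - v) * (c2 * (u + v) + c1) by ring.
exact: dvdz_mulr.
Qed.

Definition gdiff (N : nat) (a2 a1 a x : int) : int :=
  gmap N a2 a1 ((x + a) %% N%:Z)%Z - gmap N a2 a1 x.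

Lemma gdiff_mod (N : nat) (a2 a1 a x : int) :
  (gdiff N a2 a1 a x = a2 * (2 * a * x + a ^+ 2) + a1 * a %[mod N%:Z])%Z.
Proof.
rewrite /gdiff /gmap modzBm -modzDml (quadz_mod a2 a1 (modz_mod (x + a) N)) modzDml.
congr (_ %% _)%Z; ring.
Qed.

Lemma gmap_bounds (N : nat) (a2 a1 x : int) :
  (0 < N)%N -> 0 <= gmap N a2 a1 x < N%:Z.
Proof. by move=> N_gt0; rewrite modz_ge0 ?ltz_pmod //=; lia. Qed.

Lemma gdiff_bound (N : nat) (a2 a1 a x : int) :
  (0 < N)%N -> (`|gdiff N a2 a1 a x| < N)%N.
Proof.
move=> N_gt0; rewrite /gdiff.
have := gmap_bounds a2 a1 ((x + a) %% N%:Z)%Z N_gt0.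
have := gmap_bounds a2 a1 x N_gt0; lia.
Qed.

Lemma fmap_gmap (N K : nat) (a2 a1 x : int) :
  (0 < N)%N -> (N <= K)%N -> fmap N K a2 a1 x = gmap N a2 a1 x.
Proof.
move=> N_gt0 le_NK; rewrite /fmap /phimap modz_small //.
have := gmap_bounds a2 a1 x N_gt0; lia.
Qed.

Lemma is_sol_gdiff (N K : nat) (a2 a1 a b : int) (x : 'I_N) :
  (N <= K)%N -> is_sol K a2 a1 a b x -> (gdiff N a2 a1 a x = b %[mod K%:Z])%Z.
Proof.
have N_gt0 : (0 < N)%N by apply: leq_ltn_trans (ltn_ord x).
by move=> le_NK; rewrite /is_sol !fmap_gmap.
Qed.

Section GdiffInjective.

Variables (N : nat) (a2 a1 a : int).
Hypotheses (N_odd : odd N) (a2_coprime : coprimez a2 N).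
Hypotheses (a_gt0 : (0 < `|a|)%N) (a_lt_pdiv : (`|a| < pdiv N)%N).

Lemma gdiff_inj (x y : 'I_N) :
  (gdiff N a2 a1 a x = gdiff N a2 a1 a y %[mod N%:Z])%Z -> x = y.
Proof.
move=> gxy; suff [/val_inj] : x%:Z = y%:Z by [].
have N_dvd : (N%:Z %| a2 * 2 * a * (x%:Z - y%:Z))%Z.
  move: gxy; rewrite !gdiff_mod => /eqP; rewrite eqz_mod_dvd.
  congr (_ %| _)%Z; ring.
move: N_dvd; rewrite Gauss_dvdzr; last first.
  rewrite !coprimezMr [coprimez _ a2]coprimez_sym a2_coprime /=.
  by rewrite !coprimezE /= coprimen2 N_odd coprime_lt_pdiv // a_gt0.
rewrite -eqz_mod_dvd => /eqP xy; apply: eqz_mod_small xy _.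
have := ltn_ord x; have := ltn_ord y; lia.
Qed.

End GdiffInjective.

Theorem lemma3 (N K : nat) (a2 a1 : 'I_N) :
  (0 < N)%N -> odd N -> (N <= K)%N -> coprime a2 N ->
  let p := pdiv N in
  (K = N ->
     forall a b : int, - (p%:Z) < a < p%:Z -> a != 0 ->
       - (N%:Z) < b < N%:Z -> at_most_one_sol N K a2 a1 a b) /\
  ((N < K)%N -> (K < 2 * N - 1)%N ->
     forall a b : int, - (p%:Z) < a < p%:Z -> a != 0 ->
       - (K%:Z) + N%:Z - 1 < b < K%:Z - N%:Z + 1 ->
       at_most_one_sol N K a2 a1 a b) /\
  ((2 * N - 1 <= K)%N ->
     forall a b : int, - (p%:Z) < a < p%:Z -> a != 0 ->
       - (K%:Z) < b < K%:Z -> at_most_one_sol N K a2 a1 a b).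
Proof.
move=> N_gt0 N_odd le_NK a2_coprime p.
have inj a (x y : 'I_N) : - (p%:Z) < a < p%:Z -> a != 0 ->
    (gdiff N a2 a1 a x = gdiff N a2 a1 a y %[mod N%:Z])%Z -> x = y.
  by move=> a_bd a_neq0; apply: gdiff_inj => //; rewrite /p in a_bd; lia.
split; [|split].
- move=> K_eq_N a b a_bd a_neq0 _ x y /is_sol_gdiff-/(_ le_NK) solx.
  move=> /is_sol_gdiff-/(_ le_NK) soly; apply: (inj a) => //.
  by subst K; rewrite solx soly.
- move=> lt_NK lt_K2N a b a_bd a_neq0 b_bd x y /is_sol_gdiff-/(_ le_NK) solx.
  move=> /is_sol_gdiff-/(_ le_NK) soly; apply: (inj a) => //.
  have gdiff_eq_b (z : 'I_N) : (gdiff N a2 a1 a z = b %[mod K%:Z])%Z ->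
      gdiff N a2 a1 a z = b.
    move=> solz; apply: eqz_mod_small solz _.
    have := gdiff_bound a2 a1 a z N_gt0; lia.
  by rewrite (gdiff_eq_b x solx) (gdiff_eq_b y soly).
- move=> le_2N_K a b a_bd a_neq0 _ x y /is_sol_gdiff-/(_ le_NK) solx.
  move=> /is_sol_gdiff-/(_ le_NK) soly; apply: (inj a) => //.
  congr (_ %% _)%Z; apply: (@eqz_mod_small K%:Z); first by rewrite solx soly.
  have := gdiff_bound a2 a1 a x N_gt0; have := gdiff_bound a2 a1 a y N_gt0; lia.
Qed.
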